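(* Let $(X,d)$ be a quasi-pseudometric space and $f:X\to\mathbb{R}\cup\{\infty\}$ a function. 1. $f$ is nearly lower semicontinuous at $x\in X$ if and only if $f(x)\le\liminf_{n\to\infty}f(x_n)$ holds for every sequence $(x_n)$ in $X$ which has no constant subsequence and converges to $x$. 2. $f$ is lower semicontinuous on $X$ if and only if it is nearly lower semicontinuous on $X$ and $d$-monotone. 3. If the topology $\tau_d$ is $T_1$, then every nearly lower semicontinuous function $f:X\to\mathbb{R}\cup\{\infty\}$ is lower semicontinuous.
   Context: A quasi-pseudometric on a set $X$ is a map $d:X\times X\to[0,\infty)$ with $d(x,x)=0$ and $d(x,z)\le d(x,y)+d(y,z)$ for all $x,y,z$ (symmetry is not assumed). The topology $\tau_d$ has as neighbourhood base at $x$ the balls $B_d(x,r)=\{y: d(x,y)<r\}$, $r>0$; thus $x_n\to x$ iff $d(x,x_n)\to0$. All topological notions refer to $\tau_d$. A function $f:X\to\mathbb{R}\cup\{\infty\}$ is lower semicontinuous (lsc) at $x$ if $f(x)\le\liminf_n f(x_n)$ for every sequence $x_n\to x$; nearly lsc at $x$ if this inequality holds for every sequence with pairwise distinct terms converging to $x$; lsc (nearly lsc) on $X$ if it is so at every point. $f$ is $d$-monotone if $d(x,y)=0$ implies $f(x)\le f(y)$. *)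

From HB Require Import structures.
From mathcomp Require Import all_boot all_order all_algebra.
From mathcomp Require Import all_classical all_reals all_analysis.
Set Implicit Arguments. Unset Strict Implicit. Unset Printing Implicit Defensive.
Import Order.TTheory GRing.Theory Num.Theory.
Local Open Scope ring_scope.
Local Open Scope classical_set_scope.

Section QPM.
Variables (R : realType) (X : Type) (d : X -> X -> R).

Definition quasi_pseudometric : Prop :=
  (forall x y, 0 <= d x y) /\ (forall x, d x x = 0) /\
  (forall x y z, d x z <= d x y + d y z).

Definition qball (x : X) (r : R) : set X := [set y | d x y < r].

Definition qopen (U : set X) : Prop :=
  forall x, U x -> exists2 r : R, 0 < r & qball x r `<=` U.

Definition qT1 : Prop :=
  forall x y : X, x <> y -> exists U, qopen U /\ U x /\ ~ U y.

Definition qconv (u : nat -> X) (x : X) : Prop :=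
  forall e : R, 0 < e -> exists N : nat, forall n, (N <= n)%N -> d x (u n) < e.

Definition lsc_at (f : X -> \bar R) (x : X) : Prop :=
  forall u : nat -> X, qconv u x -> (f x <= limn_einf (fun n => f (u n)))%E.

Definition nearly_lsc_at (f : X -> \bar R) (x : X) : Prop :=
  forall u : nat -> X, injective u -> qconv u x ->
    (f x <= limn_einf (fun n => f (u n)))%E.

Definition lsc (f : X -> \bar R) : Prop := forall x, lsc_at f x.
Definition nearly_lsc (f : X -> \bar R) : Prop := forall x, nearly_lsc_at f x.

Definition d_monotone (f : X -> \bar R) : Prop :=
  forall x y, d x y = 0 -> (f x <= f y)%E.

Definition no_constant_subseq (u : nat -> X) : Prop :=
  ~ exists (phi : nat -> nat) (c : X),
      (forall n, (phi n < phi n.+1)%N) /\ (forall n, u (phi n) = c).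

End QPM.

(* If f x > liminf f(u_n) for some u_n -> x, then along a subsequence of (u_n)
   the values of f stay below a real a < f x, and this subsequence has in turn
   either a constant or an injective subsequence.  Near lower semicontinuity
   rules out the injective case.  A constant value y of a subsequence converging
   to x satisfies d(x, y) = 0, so d-monotonicity rules out the constant case; in
   a T1 space d(x, y) = 0 forces y = x, so every function is d-monotone.
   Conversely, testing lower semicontinuity on constant sequences gives
   d-monotonicity. *)

From HB Require Import structures.
From mathcomp Require Import all_boot all_order all_algebra.
From mathcomp Require Import all_classical all_reals all_analysis.
Import Order.TTheory GRing.Theory Num.Theory.
Local Open Scope ring_scope.

Definition strictly_increasing (phi : nat -> nat) := forall n, (phi n < phi n.+1)%N.

Definition infinitely_often (P : nat -> Prop) :=
  forall N, exists n, (N <= n)%N /\ P n.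

Section Subsequences.
Implicit Types (phi psi : nat -> nat).

Lemma leq_increasing phi : strictly_increasing phi -> forall n, (n <= phi n)%N.
Proof. by move=> phi_incr; elim=> // n IHn; exact: leq_ltn_trans IHn (phi_incr n). Qed.

Lemma increasing_comp {phi psi} :
  strictly_increasing phi -> strictly_increasing psi ->
  strictly_increasing (phi \o psi).
Proof. by move=> phi_incr psi_incr n; apply: (homo_ltn ltn_trans phi_incr). Qed.

Lemma infinitely_often_subseq (P : nat -> Prop) : infinitely_often P ->
  exists2 phi, strictly_increasing phi & forall n, P (phi n).
Proof.
move=> /choice [g Pg]; exists (fun n => iter n.+1 (fun m => g m.+1) 0%N).
- by move=> n; exact: (Pg _).1.
- by move=> n; exact: (Pg _).2.
Qed.

Lemma constant_or_injective_subseq {X : Type} (u : nat -> X) :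
  (exists phi y, strictly_increasing phi /\ forall n, u (phi n) = y) \/
  exists2 phi, strictly_increasing phi & injective (u \o phi).
Proof.
have [[y /infinitely_often_subseq [phi phi_incr uy]]|] :=
  pselect (exists y, infinitely_often (fun n => u n = y)).
  by left; exists phi, y.
move=> /forallNP rare; right.
have /choice [B uB] : forall y, exists N, forall n, (N <= n)%N -> u n <> y.
  move=> y; apply: contrapT => /forallNP noB; apply: (rare y) => N.
  have /existsNP [n /not_implyP [Nn /contrapT uy]] := noB N.
  by exists n.
pose next m := maxn m.+1 (B (u m)).
pose phi n := iter n next 0%N.
have phi_incr : strictly_increasing phi by move=> n; rewrite /= leq_maxl.
have phi_le : {homo phi : m n / (m <= n)%N}.
  exact/ltnW_homo/(homo_ltn ltn_trans).
(* Every later term lies beyond [B (u (phi i))], hence differs from [u (phi i)]. *)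
have uphi_neq i j : (i < j)%N -> u (phi j) <> u (phi i).
  by move=> ij; apply: uB; apply: leq_trans (leq_maxr _ _) (phi_le _ _ ij).
exists phi => // i j /= uij.
case: (ltngtP i j) => // ij; exfalso.
- exact: uphi_neq _ _ ij (esym uij).
- exact: uphi_neq _ _ ij uij.
Qed.

End Subsequences.

Section ExtendedLiminf.
Context {R : realType}.
Local Open Scope ereal_scope.
Implicit Types (g : nat -> \bar R) (a c : \bar R).

Lemma lte_EFin_between (x y : \bar R) :
  x < y -> exists2 r : R, x < r%:E & r%:E < y.
Proof.
case: x => [r| |]; case: y => [s| |] //.
- by rewrite lte_fin => /midf_lt[rm ms]; exists ((r + s) / 2)%R; rewrite lte_fin.
- by exists (r + 1)%R; rewrite ?ltry // lte_fin ltrDl.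
- by exists (s - 1)%R; rewrite ?ltNyr // lte_fin gtrDl oppr_lt0.
- by exists 0%R; rewrite ?ltNyr ?ltry.
Qed.

Lemma limn_einf_lt_frequently g c : limn_einf g < c ->
  exists2 a : R, a%:E < c & infinitely_often (fun n => g n < a%:E).
Proof.
move=> /lte_EFin_between [a ga ac]; exists a => // N.
have : einfs g N < a%:E.
  apply: le_lt_trans ga; rewrite limn_einf_lim.
  apply: lime_ge; first exact: is_cvg_einfs.
  by exists N => // m; exact: nondecreasing_einfs.
by move=> /ereal_inf_lt [_ [n /= Nn <-] gna]; exists n.
Qed.

Lemma limn_einf_le g a : (forall n, g n <= a) -> limn_einf g <= a.
Proof.
move=> ga; rewrite limn_einf_lim; apply: lime_le; first exact: is_cvg_einfs.
apply: nearW => m; apply: le_trans (ga m).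
by apply: ereal_inf_lbound; exists m => /=.
Qed.

Lemma limn_einf_cst a : limn_einf (fun=> a) = a.
Proof. by have [] := cvg_limn_einf_sup (cvg_cst a). Qed.

Lemma limn_einf_ge_subseq {X : Type} (f : X -> \bar R) (u : nat -> X) c :
  (forall phi, strictly_increasing phi -> injective (u \o phi) ->
     c <= limn_einf (fun n => f (u (phi n)))) ->
  (forall phi y, strictly_increasing phi -> (forall n, u (phi n) = y) ->
     c <= f y) ->
  c <= limn_einf (fun n => f (u n)).
Proof.
move=> le_inj le_cst; rewrite leNgt; apply/negP.
move=> /limn_einf_lt_frequently [a ac /infinitely_often_subseq [phi phi_incr fa]].
have [[psi [y [psi_incr uy]]]|[psi psi_incr inj]] :=
  constant_or_injective_subseq (u \o phi).
- have : c <= f y := le_cst _ y (increasing_comp phi_incr psi_incr) uy.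
  by rewrite -(uy 0%N) => /le_lt_trans /(_ (fa _)) /(lt_trans ac); rewrite ltxx.
- have lim_le_a : limn_einf (fun n => f (u (phi (psi n)))) <= a%:E.
    by apply: limn_einf_le => n; exact/ltW/fa.
  have := le_inj _ (increasing_comp phi_incr psi_incr) inj.
  by move=> /le_trans /(_ lim_le_a) /(lt_le_trans ac); rewrite ltxx.
Qed.

End ExtendedLiminf.

Section QuasiPseudometric.
Context {R : realType} {X : Type} {d : X -> X -> R}.
Hypothesis d_ge0 : forall x y, 0 <= d x y.

Lemma qconv_subseq {u : nat -> X} {x : X} {phi : nat -> nat} :
  strictly_increasing phi -> qconv d u x -> qconv d (u \o phi) x.
Proof.
move=> phi_incr ux e e0; have [N uN] := ux e e0; exists N => n Nn.
exact/uN/(leq_trans Nn)/leq_increasing.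
Qed.

Lemma qconv_cst (x y : X) : d x y = 0 -> qconv d (fun=> y) x.
Proof. by move=> dxy e e0; exists 0%N => n _; rewrite dxy. Qed.

Lemma qconv_cst_dist0 (x y : X) : qconv d (fun=> y) x -> d x y = 0.
Proof.
move=> yx; apply/eqP; rewrite eq_le d_ge0 andbT.
apply/ler_addgt0Pr => e e0; rewrite add0r.
by have [N /(_ N (leqnn N)) /ltW] := yx e e0.
Qed.

Lemma qT1_dist0_eq : qT1 d -> forall x y, d x y = 0 -> x = y.
Proof.
move=> T1 x y dxy; apply: contrapT => /T1 [U [oU [Ux Uy]]].
have [r r0 xrU] := oU x Ux.
by apply/Uy/xrU; rewrite /qball /= dxy.
Qed.

Lemma qT1_d_monotone (f : X -> \bar R) : qT1 d -> d_monotone d f.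
Proof. by move=> T1 x y /(qT1_dist0_eq T1) ->. Qed.

Lemma nearly_lsc_atP (f : X -> \bar R) (x : X) :
  nearly_lsc_at d f x <->
  (forall u : nat -> X, no_constant_subseq u -> qconv d u x ->
     (f x <= limn_einf (fun n => f (u n)))%E).
Proof.
split=> [nlsc u ncst ux | lsc_ncst u inj ux].
- apply: limn_einf_ge_subseq => [phi phi_incr inj|phi y phi_incr uy].
    exact: nlsc inj (qconv_subseq phi_incr ux).
  by exfalso; apply: ncst; exists phi, y.
- apply: lsc_ncst ux => -[phi [c [phi_incr uc]]].
  have phi01 := inj _ _ (etrans (uc 0%N) (esym (uc 1%N))).
  by have := phi_incr 0%N; rewrite phi01 ltnn.
Qed.

Lemma lsc_at_nearly_monotone (f : X -> \bar R) (x : X) :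
  nearly_lsc_at d f x -> (forall y, d x y = 0 -> (f x <= f y)%E) ->
  lsc_at d f x.
Proof.
move=> nlsc mono u ux.
apply: limn_einf_ge_subseq => [phi phi_incr inj|phi y phi_incr uy].
  exact: nlsc inj (qconv_subseq phi_incr ux).
apply/mono/qconv_cst_dist0.
have -> : (fun=> y) = u \o phi by apply/funext => n; rewrite /= uy.
exact: qconv_subseq phi_incr ux.
Qed.

Lemma lsc_d_monotone (f : X -> \bar R) : lsc d f -> d_monotone d f.
Proof. by move=> lscf x y /qconv_cst /lscf; rewrite limn_einf_cst. Qed.

Lemma lsc_nearly_monotoneP (f : X -> \bar R) :
  lsc d f <-> nearly_lsc d f /\ d_monotone d f.
Proof.
split=> [lscf | [nlsc mono] x].
  by split=> [x u _|]; [exact: lscf | exact: lsc_d_monotone].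
by apply: lsc_at_nearly_monotone => // y /mono.
Qed.

End QuasiPseudometric.

Theorem proposition2p11 (R : realType) (X : Type) (d : X -> X -> R) :
  quasi_pseudometric d ->
  (* 1 *)
  (forall (f : X -> \bar R), (forall x, f x <> -oo%E) ->
     forall x : X,
       nearly_lsc_at d f x <->
       (forall u : nat -> X, no_constant_subseq u -> qconv d u x ->
          (f x <= limn_einf (fun n => f (u n)))%E)) /\
  (* 2 *)
  (forall (f : X -> \bar R), (forall x, f x <> -oo%E) ->
     lsc d f <-> (nearly_lsc d f /\ d_monotone d f)) /\
  (* 3 *)
  (qT1 d -> forall (f : X -> \bar R), (forall x, f x <> -oo%E) ->
     nearly_lsc d f -> lsc d f).
Proof.
move=> [d_ge0 _]; split; [|split].
- by move=> f _; exact: nearly_lsc_atP.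
- by move=> f _; exact: lsc_nearly_monotoneP.
- move=> T1 f _ nlsc; apply/(lsc_nearly_monotoneP d_ge0).
  by split=> //; exact: qT1_d_monotone.
Qed.
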